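(* Let $\xi>0$, $\alpha>0$, and consider, for $\sigma\ge0$, $\rho\ge0$, $y\in\mathbb{R}$, the system \[ \begin{aligned} \dot\sigma&=\sigma(-2+\rho\sigma+\rho^2)\left(y-\tfrac{\alpha}{\xi}\right)\bigl(1+O(\rho)\bigr),\\ \dot y&=\sigma+y\rho\sigma\left(y-\tfrac{\alpha}{\xi}\right)\bigl(1+O(\rho)\bigr),\\ \dot\rho&=\rho(2-\rho\sigma)\left(y-\tfrac{\alpha}{\xi}\right)\bigl(1+O(\rho)\bigr), \end{aligned} \] where the $O(\rho)$ terms are smooth functions vanishing at $\rho=0$. Then the planes $\{\rho=0\}$ and $\{\sigma=0\}$ are invariant and their intersection $\{\rho=\sigma=0\}$ is a line of fixed points. Moreover: (i) the origin $(\sigma,y,\rho)=(0,0,0)$ has the strong stable manifold $W^s(0,0,0)=\{\sigma=0,\ y=0,\ \rho\ge0\}$; (ii) there is a heteroclinic connection $\gamma^{2,4}=\{\sigma=\tfrac{2\alpha}{\xi}y-y^2,\ y\in(0,2\alpha/\xi),\ \rho=0\}$ joining $(0,0,0)$ backwards in time with $(\sigma,y,\rho)=(0,2\alpha/\xi,0)$ forward in time; (iii) the point $(0,2\alpha/\xi,0)$ has the strong unstable manifold $W^u(0,2\alpha/\xi,0)=\{\sigma=0,\ y=2\alpha/\xi,\ \rho\ge0\}$.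
   Context: This system is the flow on the attracting center manifold $x=-1-\alpha+O(r+q)$ of the system $\dot r=r^2q(y+\frac{x+1}{\xi})$, $\dot x=-(x+1+\alpha)+xrq(y+\frac{x+1}{\xi})$, $\dot y=r+yrq(y+\frac{x+1}{\xi})$, $\dot q=q^2(2-r)(y+\frac{x+1}{\xi})$, written in the blow-up coordinates $r=\rho\sigma$, $q=\rho$ and divided by $\rho$; the plane $\rho=0$ corresponds to the blown-up line $L_0=\{r=q=0,\ x=-1-\alpha\}$. *)

From Stdlib Require Import Reals.
From Coquelicot Require Import Coquelicot.
Open Scope R_scope.

Definition cont3 (f : R -> R -> R -> R) (a b c : R) : Prop :=
  continuous (fun p : R * R * R => f (fst (fst p)) (snd (fst p)) (snd p)) (a, b, c).

Fixpoint Cn3 (n : nat) (f : R -> R -> R -> R) : Prop :=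
  match n with
  | O => forall a b c, cont3 f a b c
  | S m => (forall a b c, cont3 f a b c) /\
      exists f1 f2 f3 : R -> R -> R -> R,
        (forall a b c, is_derive (fun t => f t b c) a (f1 a b c)) /\
        (forall a b c, is_derive (fun t => f a t c) b (f2 a b c)) /\
        (forall a b c, is_derive (fun t => f a b t) c (f3 a b c)) /\
        Cn3 m f1 /\ Cn3 m f2 /\ Cn3 m f3
  end.

Definition smooth3 (f : R -> R -> R -> R) : Prop := forall n, Cn3 n f.

(* The vector field in coordinates (sigma, y, rho); h1 h2 h3 are the O(rho)
   terms multiplying the three equations. *)
Definition F_sigma (al xi : R) (h1 : R -> R -> R -> R) (s y r : R) : R :=
  s * (-2 + r * s + r ^ 2) * (y - al / xi) * (1 + h1 s y r).
Definition F_y (al xi : R) (h2 : R -> R -> R -> R) (s y r : R) : R :=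
  s + y * r * s * (y - al / xi) * (1 + h2 s y r).
Definition F_rho (al xi : R) (h3 : R -> R -> R -> R) (s y r : R) : R :=
  r * (2 - r * s) * (y - al / xi) * (1 + h3 s y r).

Definition is_solution (al xi : R) (h1 h2 h3 : R -> R -> R -> R)
    (a b : Rbar) (s y r : R -> R) : Prop :=
  forall t : R, Rbar_lt a t -> Rbar_lt t b ->
    is_derive s t (F_sigma al xi h1 (s t) (y t) (r t)) /\
    is_derive y t (F_y al xi h2 (s t) (y t) (r t)) /\
    is_derive r t (F_rho al xi h3 (s t) (y t) (r t)).

Definition in_U (d p1 p2 p3 s y r : R) : Prop :=
  0 <= s /\ 0 <= r /\ Rabs (s - p1) < d /\ Rabs (y - p2) < d /\ Rabs (r - p3) < d.

Definition loc_stable_set (al xi : R) (h1 h2 h3 : R -> R -> R -> R)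
    (d p1 p2 p3 q1 q2 q3 : R) : Prop :=
  exists (a : R) (s y r : R -> R),
    a < 0 /\ is_solution al xi h1 h2 h3 (Finite a) p_infty s y r /\
    s 0 = q1 /\ y 0 = q2 /\ r 0 = q3 /\
    (forall t, 0 <= t -> in_U d p1 p2 p3 (s t) (y t) (r t)) /\
    is_lim s p_infty p1 /\ is_lim y p_infty p2 /\ is_lim r p_infty p3.

Definition loc_unstable_set (al xi : R) (h1 h2 h3 : R -> R -> R -> R)
    (d p1 p2 p3 q1 q2 q3 : R) : Prop :=
  exists (b : R) (s y r : R -> R),
    0 < b /\ is_solution al xi h1 h2 h3 m_infty (Finite b) s y r /\
    s 0 = q1 /\ y 0 = q2 /\ r 0 = q3 /\
    (forall t, t <= 0 -> in_U d p1 p2 p3 (s t) (y t) (r t)) /\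
    is_lim s m_infty p1 /\ is_lim y m_infty p2 /\ is_lim r m_infty p3.

(** The planes rho = 0 and sigma = 0 are invariant because rho and sigma solve
    linear equations u' = u G(t) with G continuous, and such a u vanishing at
    one time vanishes everywhere.  On rho = 0, where h1 vanishes, the curve
    sigma = c y - y^2 with c = 2 al/xi is invariant, and on it y' = sigma is the
    logistic equation y' = y (c - y); its solution y(t) = c / (1 + exp (- c t))
    is gamma^{2,4}.  Near (0,0,0), where y < al/xi, sigma is nondecreasing
    along forward orbits, so a forward orbit converging to the origin has
    sigma = 0, hence y' = 0, and it starts on {sigma = y = 0}.  Conversely, on
    that line rho' = - rho phi(rho) with phi close to 2 al/xi, and these
    solutions decay to 0.  The point (0, c, 0) is handled in the same way with
    time reversed. *)

From Stdlib Require Import Reals Lra ClassicalEpsilon Ranalysis5.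
From Coquelicot Require Import Coquelicot.
Open Scope R_scope.

Lemma is_derive_continuity_pt (f : R -> R) (x l : R) :
  is_derive f x l -> continuity_pt f x.
Proof.
  intros H. apply continuity_pt_filterlim.
  apply (ex_derive_continuous (K := R_AbsRing) (V := R_NormedModule)).
  now exists l.
Qed.

Lemma le_of_derive_nonneg (g dg : R -> R) (a b : R) : a <= b ->
  (forall x, a <= x <= b -> is_derive g x (dg x)) ->
  (forall x, a <= x <= b -> 0 <= dg x) -> g a <= g b.
Proof.
  intros Hab Hd Hpos.
  destruct (MVT_gen g a b dg) as [c [Hc E]];
    rewrite ?Rmin_left, ?Rmax_right in * by lra.
  - intros x Hx. apply Hd; lra.
  - intros x Hx. apply (is_derive_continuity_pt g x (dg x)), Hd; lra.
  - assert (0 <= dg c * (b - a)) by (apply Rmult_le_pos; [apply Hpos|]; lra).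
    lra.
Qed.

Lemma is_derive_inverse (f g df : R -> R) (lb ub y : R) :
  (forall x x', lb <= x -> x < x' -> x' <= ub -> f x < f x') ->
  (forall x, lb <= x <= ub -> is_derive f x (df x)) ->
  (forall z, f lb <= z <= f ub -> lb <= g z <= ub /\ f (g z) = z) ->
  f lb < y < f ub -> df (g y) <> 0 -> is_derive g y (/ df (g y)).
Proof.
  intros Hincr Hd Hg Hy Hdf.
  assert (Hlt : lb < ub).
  { destruct (Hg y ltac:(lra)) as [Hr _].
    destruct (Req_dec lb ub) as [E|E]; [subst; lra|lra]. }
  assert (Hinj : forall x x', lb <= x <= ub -> lb <= x' <= ub -> f x = f x' -> x = x').
  { intros x x' Hx Hx' E.
    destruct (Rtotal_order x x') as [L|[L|L]]; auto;
      [specialize (Hincr x x') | specialize (Hincr x' x)]; lra. }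
  assert (Glb : g (f lb) = lb) by (destruct (Hg (f lb)) as [? ?]; [lra|]; apply Hinj; lra).
  assert (Gub : g (f ub) = ub) by (destruct (Hg (f ub)) as [? ?]; [lra|]; apply Hinj; lra).
  assert (Prf : forall a, g (f lb) <= a <= g (f ub) -> derivable_pt f a).
  { intros a Ha. exists (df a). apply is_derive_Reals, Hd. lra. }
  assert (Prg : g (f lb) <= g y <= g (f ub)).
  { rewrite Glb, Gub. apply Hg. lra. }
  assert (Hcont : continuity_pt g y).
  { apply (continuity_pt_recip_interv f g lb ub Hlt); auto.
    - intros z Hz1 Hz2. apply (Hg z). lra.
    - intros z Hz1 Hz2. apply (Hg z). lra.
    - intros a Ha. apply (is_derive_continuity_pt f a (df a)), Hd; lra. }
  assert (E : derive_pt f (g y) (Prf (g y) Prg) = df (g y)).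
  { apply derive_pt_eq_0, is_derive_Reals, Hd. rewrite Glb, Gub in Prg. lra. }
  pose proof (derivable_pt_lim_recip_interv f g (f lb) (f ub) y Prf Hcont
    ltac:(lra) Hy Prg) as H.
  rewrite E in H. apply is_derive_Reals. unfold Rdiv in H. rewrite Rmult_1_l in H.
  apply H; [|exact Hdf].
  intros z Hz. apply Hg. exact Hz.
Qed.

Lemma lim_p_infty_ge_of_derive_nonneg (g dg : R -> R) (L : R) :
  (forall t, 0 <= t -> is_derive g t (dg t)) ->
  (forall t, 0 <= t -> 0 <= dg t) -> is_lim g p_infty L -> g 0 <= L.
Proof.
  intros Hd Hpos Hl.
  apply (is_lim_le_loc (fun _ => g 0) g p_infty (g 0) L); [|apply is_lim_const|exact Hl].
  exists 0. intros t Ht.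
  apply (le_of_derive_nonneg g dg); [lra| |]; intros x Hx; [apply Hd | apply Hpos]; lra.
Qed.

Lemma lim_m_infty_ge_of_derive_nonpos (g dg : R -> R) (L : R) :
  (forall t, t <= 0 -> is_derive g t (dg t)) ->
  (forall t, t <= 0 -> dg t <= 0) -> is_lim g m_infty L -> g 0 <= L.
Proof.
  intros Hd Hneg Hl.
  apply (is_lim_le_loc (fun _ => g 0) g m_infty (g 0) L); [|apply is_lim_const|exact Hl].
  exists 0. intros t Ht. apply Ropp_le_cancel.
  apply (le_of_derive_nonneg (fun x => - g x) (fun x => - dg x)); [lra| |].
  - intros x Hx. apply (is_derive_opp g), Hd. lra.
  - intros x Hx. assert (dg x <= 0) by (apply Hneg; lra). lra.
Qed.

Lemma lim_p_infty_eq_of_derive_zero (g : R -> R) (L : R) :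
  (forall t, 0 <= t -> is_derive g t 0) -> is_lim g p_infty L -> g 0 = L.
Proof.
  intros Hd Hl. apply Rle_antisym.
  - apply (lim_p_infty_ge_of_derive_nonneg g (fun _ => 0)); auto with real.
  - apply Ropp_le_cancel.
    apply (lim_p_infty_ge_of_derive_nonneg (fun t => - g t) (fun _ => 0));
      [| intros; lra | apply (is_lim_opp g p_infty L), Hl].
    intros t Ht. rewrite <- Ropp_0. apply (is_derive_opp g), Hd, Ht.
Qed.

Lemma lim_m_infty_eq_of_derive_zero (g : R -> R) (L : R) :
  (forall t, t <= 0 -> is_derive g t 0) -> is_lim g m_infty L -> g 0 = L.
Proof.
  intros Hd Hl. apply Rle_antisym.
  - apply (lim_m_infty_ge_of_derive_nonpos g (fun _ => 0)); auto with real.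
  - apply Ropp_le_cancel.
    apply (lim_m_infty_ge_of_derive_nonpos (fun t => - g t) (fun _ => 0));
      [| intros; lra | apply (is_lim_opp g m_infty L), Hl].
    intros t Ht. rewrite <- Ropp_0. apply (is_derive_opp g), Hd, Ht.
Qed.

Lemma is_derive_const_R (c t : R) : is_derive (fun _ : R => c) t 0.
Proof. apply (is_derive_const (K := R_AbsRing) (V := R_NormedModule)). Qed.

Lemma is_derive_reverse_time (g : R -> R) (t l : R) :
  is_derive g (- t) l -> is_derive (fun t => g (- t)) t (- l).
Proof.
  intros H. replace (- l) with (scal (-1) l) by (unfold scal; simpl; unfold mult; simpl; ring).
  apply (is_derive_comp g (fun t => - t)); [exact H|].
  auto_derive; [exact I | ring].
Qed.

Lemma is_lim_reverse_time (g : R -> R) (L : Rbar) :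
  is_lim g p_infty L -> is_lim (fun t => g (- t)) m_infty L.
Proof.
  intros H. eapply is_lim_comp; [exact H| |now exists 0].
  apply (is_lim_opp (fun t => t) m_infty m_infty), is_lim_id.
Qed.

Lemma is_lim_scale_p (c : R) : 0 < c -> is_lim (fun t => c * t) p_infty p_infty.
Proof.
  intros Hc. replace p_infty with (Rbar_mult c p_infty) at 2.
  - apply is_lim_scal_l, is_lim_id.
  - simpl. unfold Rbar_mult'. case Rle_dec; intro; [|lra].
    case Rle_lt_or_eq_dec; intro; [reflexivity|lra].
Qed.

Lemma is_lim_scale_m (c : R) : 0 < c -> is_lim (fun t => c * t) m_infty m_infty.
Proof.
  intros Hc. replace m_infty with (Rbar_mult c m_infty) at 2.
  - apply is_lim_scal_l, is_lim_id.
  - simpl. unfold Rbar_mult'. case Rle_dec; intro; [|lra].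
    case Rle_lt_or_eq_dec; intro; [reflexivity|lra].
Qed.

Lemma is_lim_comp_continuous_eq (f g : R -> R) (x : Rbar) (l L : R) :
  is_lim f x l -> continuous g l -> g l = L -> is_lim (fun t => g (f t)) x L.
Proof. intros Hf Hg <-. now apply is_lim_comp_continuous. Qed.

Definition logistic (u : R) : R := / (1 + exp (- u)).

Lemma logistic_bounds (u : R) : 0 < logistic u < 1.
Proof.
  unfold logistic. assert (E := exp_pos (- u)). split.
  - apply Rinv_0_lt_compat; lra.
  - rewrite <- Rinv_1. apply Rinv_lt_contravar; lra.
Qed.

Lemma is_derive_logistic (u : R) :
  is_derive logistic u (logistic u * (1 - logistic u)).
Proof.
  unfold logistic. assert (E := exp_pos (- u)).
  auto_derive; [lra|]. field. lra.
Qed.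

Lemma logistic_logit (p : R) : 0 < p < 1 -> logistic (ln (p / (1 - p))) = p.
Proof.
  intros Hp. unfold logistic.
  rewrite <- ln_Rinv by (apply Rdiv_lt_0_compat; lra).
  rewrite exp_ln by (apply Rinv_0_lt_compat, Rdiv_lt_0_compat; lra).
  field. lra.
Qed.

Lemma is_lim_logistic_m_infty : is_lim logistic m_infty 0.
Proof.
  replace (Finite 0) with (Rbar_inv p_infty) by reflexivity.
  apply is_lim_inv; [|discriminate].
  apply (is_lim_plus _ _ _ 1 p_infty); [apply is_lim_const| |reflexivity].
  eapply is_lim_comp; [apply is_lim_exp_p| |now exists 0].
  apply (is_lim_opp (fun y => y) m_infty m_infty), is_lim_id.
Qed.

Lemma is_lim_logistic_p_infty : is_lim logistic p_infty 1.
Proof.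
  replace (Finite 1) with (Rbar_inv (1 + 0)) by (simpl; f_equal; field).
  apply is_lim_inv; [|simpl; intro H; injection H; lra].
  apply (is_lim_plus _ _ _ 1 0); [apply is_lim_const| |reflexivity].
  eapply is_lim_comp; [apply is_lim_exp_m| |now exists 0].
  apply (is_lim_opp (fun y => y) p_infty p_infty), is_lim_id.
Qed.

Lemma is_derive_logistic_curve (c t : R) :
  is_derive (fun t => c * logistic (c * t)) t
    (c * (c * logistic (c * t)) - (c * logistic (c * t)) ^ 2).
Proof.
  auto_derive; [eexists; apply is_derive_logistic|].
  replace (Derive _ (c * t)) with (logistic (c * t) * (1 - logistic (c * t)))
    by (symmetry; apply is_derive_unique, is_derive_logistic).
  ring.
Qed.

Lemma is_lim_logistic_curve_m_infty (c : R) : 0 < c ->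
  is_lim (fun t => logistic (c * t)) m_infty 0.
Proof.
  intros Hc. eapply is_lim_comp;
    [apply is_lim_logistic_m_infty | apply is_lim_scale_m, Hc | now exists 0].
Qed.

Lemma is_lim_logistic_curve_p_infty (c : R) : 0 < c ->
  is_lim (fun t => logistic (c * t)) p_infty 1.
Proof.
  intros Hc. eapply is_lim_comp;
    [apply is_lim_logistic_p_infty | apply is_lim_scale_p, Hc | now exists 0].
Qed.

Lemma is_derive_sq_exp (u : R -> R) (du K x : R) : is_derive u x du ->
  is_derive (fun x => u x ^ 2 * exp (K * x)) x
    (u x * exp (K * x) * (2 * du + K * u x)).
Proof.
  intros H. auto_derive.
  - now exists du.
  - replace (Derive _ x) with du by (symmetry; now apply is_derive_unique). ring.
Qed.

Lemma linear_ode_zero_segment (u G : R -> R) (c d M : R) : c <= d ->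
  (forall x, c <= x <= d -> is_derive u x (u x * G x)) ->
  (forall x, c <= x <= d -> Rabs (G x) <= M) ->
  u c = 0 <-> u d = 0.
Proof.
  intros Hcd Hd HM.
  assert (HG : forall x, c <= x <= d -> - M <= G x <= M)
    by (intros x Hx; apply Rabs_le_between, HM, Hx).
  assert (Hsq : forall x K, u x ^ 2 * exp (K * x) <= 0 -> u x = 0).
  { intros x K H. destruct (Req_dec (u x) 0) as [|Hne]; [assumption|].
    assert (0 < u x ^ 2 * exp (K * x))
      by (apply Rmult_lt_0_compat; [apply pow2_gt_0, Hne | apply exp_pos]).
    lra. }
  (* u^2 e^(-2Mx) is nonincreasing and u^2 e^(2Mx) nondecreasing. *)
  split; intros H0.
  - apply (Hsq d (- 2 * M)).
    assert (- (u c ^ 2 * exp (- 2 * M * c)) <= - (u d ^ 2 * exp (- 2 * M * d))).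
    { apply (le_of_derive_nonneg (fun x => - (u x ^ 2 * exp (- 2 * M * x)))
        (fun x => - (u x * exp (- 2 * M * x) * (2 * (u x * G x) + - 2 * M * u x))));
        [exact Hcd| |].
      - intros x Hx. apply (is_derive_opp (fun x => u x ^ 2 * exp (- 2 * M * x))).
        apply is_derive_sq_exp, Hd, Hx.
      - intros x Hx. specialize (HG x Hx).
        assert (0 <= u x ^ 2 * exp (- 2 * M * x))
          by (apply Rmult_le_pos; [apply pow2_ge_0 | apply Rlt_le, exp_pos]).
        nra. }
    rewrite H0 in H. lra.
  - apply (Hsq c (2 * M)).
    assert (u c ^ 2 * exp (2 * M * c) <= u d ^ 2 * exp (2 * M * d)).
    { apply (le_of_derive_nonneg (fun x => u x ^ 2 * exp (2 * M * x))
        (fun x => u x * exp (2 * M * x) * (2 * (u x * G x) + 2 * M * u x)));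
        [exact Hcd| |].
      - intros x Hx. apply is_derive_sq_exp, Hd, Hx.
      - intros x Hx. specialize (HG x Hx).
        assert (0 <= u x ^ 2 * exp (2 * M * x))
          by (apply Rmult_le_pos; [apply pow2_ge_0 | apply Rlt_le, exp_pos]).
        nra. }
    rewrite H0 in H. lra.
Qed.

Lemma linear_ode_zero (u G : R -> R) (a b : Rbar) (t0 : R) :
  (forall t : R, Rbar_lt a t -> Rbar_lt t b -> is_derive u t (u t * G t)) ->
  (forall t : R, Rbar_lt a t -> Rbar_lt t b -> continuity_pt G t) ->
  Rbar_lt a t0 -> Rbar_lt t0 b -> u t0 = 0 ->
  forall t : R, Rbar_lt a t -> Rbar_lt t b -> u t = 0.
Proof.
  intros Hd Hc Ha0 Hb0 Hu0 t Ha Hb.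
  assert (Hseg : forall c d : R, Rbar_lt a c -> Rbar_lt d b -> c <= d -> u c = 0 <-> u d = 0).
  { intros c d Hac Hdb Hcd.
    assert (Hin : forall x, c <= x <= d -> Rbar_lt a x /\ Rbar_lt x b).
    { intros x Hx. split.
      - apply (Rbar_lt_le_trans _ c); [exact Hac | simpl; lra].
      - apply (Rbar_le_lt_trans _ d); [simpl; lra | exact Hdb]. }
    destruct (continuity_ab_maj (fun x => Rabs (G x)) c d Hcd) as [xm [Hxm _]].
    { intros x Hx. destruct (Hin x Hx).
      apply (continuity_pt_comp G Rabs x); [now apply Hc | apply Rcontinuity_abs]. }
    apply (linear_ode_zero_segment u G c d (Rabs (G xm)) Hcd); [|exact Hxm].
    intros x Hx. destruct (Hin x Hx). now apply Hd. }
  destruct (Rle_or_lt t0 t).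
  - now apply (Hseg t0 t).
  - apply (Hseg t t0); auto; lra.
Qed.

(** Solutions of rho' = - rho phi(rho) with phi between m > 0 and M, through
    q > 0: the time map tau x = int_q^x du / (u phi u) is increasing, with
    tau x <= (ln x - ln q) / M, so it maps (0, mid) onto (-oo, tau mid) and
    rho t = tau^-1 (- t) is defined on (- tau mid, +oo) and tends to 0.  The
    inverse is only taken on (0, mid) so that it stays inside (0, D). *)
Section Decay.

Variables (phi : R -> R) (D m M q : R).
Hypothesis m_pos : 0 < m.
Hypothesis phi_bounds : forall u, 0 < u < D -> m <= phi u <= M.
Hypothesis phi_cont : forall u, 0 < u < D -> continuity_pt phi u.
Hypothesis q_range : 0 < q < D.

Let inv_rate (u : R) : R := / (u * phi u).
Let time_map (x : R) : R := RInt inv_rate q x.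
Let mid : R := (q + D) / 2.

Lemma phi_upper_pos : 0 < M.
Proof. destruct (phi_bounds q q_range). lra. Qed.

Lemma inv_rate_pos u : 0 < u < D -> 0 < inv_rate u.
Proof.
  intros Hu. destruct (phi_bounds u Hu).
  apply Rinv_0_lt_compat, Rmult_lt_0_compat; lra.
Qed.

Lemma inv_rate_ge u : 0 < u < D -> / (M * u) <= inv_rate u.
Proof.
  intros Hu. destruct (phi_bounds u Hu).
  apply Rinv_le_contravar; [apply Rmult_lt_0_compat|]; nra.
Qed.

Lemma inv_rate_continuous u : 0 < u < D -> continuous inv_rate u.
Proof.
  intros Hu. destruct (phi_bounds u Hu). apply continuity_pt_filterlim.
  apply (continuity_pt_inv (fun u => u * phi u)); [|apply Rgt_not_eq; nra].
  apply continuity_pt_mult; [apply continuity_pt_id | now apply phi_cont].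
Qed.

Lemma time_map_derive x : 0 < x < D -> is_derive time_map x (inv_rate x).
Proof.
  intros Hx. apply (is_derive_RInt inv_rate time_map q); [|now apply inv_rate_continuous].
  assert (Hd : 0 < Rmin x (D - x)) by (apply Rmin_pos; lra).
  exists (mkposreal _ Hd). intros y Hy.
  change (Rabs (y - x) < Rmin x (D - x)) in Hy.
  assert (Rmin x (D - x) <= x) by apply Rmin_l.
  assert (Rmin x (D - x) <= D - x) by apply Rmin_r.
  apply Rabs_def2 in Hy.
  apply (RInt_correct (V := R_CompleteNormedModule)), ex_RInt_continuous.
  intros z Hz. apply inv_rate_continuous. split.
  - apply (Rlt_le_trans _ (Rmin q y)); [apply Rmin_case; lra | apply Hz].
  - apply (Rle_lt_trans _ (Rmax q y)); [apply Hz | apply Rmax_case; lra].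
Qed.

Lemma time_map_incr x y : 0 < x -> x < y -> y < D -> time_map x < time_map y.
Proof.
  intros Hx Hxy Hy. apply (incr_function time_map (Finite 0) (Finite D) inv_rate); simpl; auto.
  - intros z Hz0 HzD. apply time_map_derive. lra.
  - intros z Hz0 HzD. apply inv_rate_pos. lra.
Qed.

Lemma time_map_q : time_map q = 0.
Proof. apply (RInt_point (V := R_CompleteNormedModule)). Qed.

Lemma time_map_le_log x : 0 < x <= q -> time_map x <= (ln x - ln q) / M.
Proof.
  intros Hx. assert (HM := phi_upper_pos).
  assert (H : time_map x - ln x / M <= time_map q - ln q / M).
  { apply (le_of_derive_nonneg (fun z => time_map z - ln z / M) (fun z => inv_rate z - / (M * z)));
      [lra| |].
    - intros z Hz. apply (is_derive_minus time_map (fun z => ln z / M)).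
      + apply time_map_derive. lra.
      + auto_derive; [lra|]. field. lra.
    - intros z Hz. assert (/ (M * z) <= inv_rate z) by (apply inv_rate_ge; lra). lra. }
  rewrite time_map_q in H. unfold Rdiv in *. lra.
Qed.

Lemma time_map_surj t : t < time_map mid -> exists x, 0 < x < mid /\ time_map x = t.
Proof.
  intros Ht. assert (HM := phi_upper_pos).
  set (x0 := q * exp (- (M * (Rabs t + 1)))).
  assert (Hx0 : 0 < x0 < q).
  { unfold x0. split; [apply Rmult_lt_0_compat; [lra|apply exp_pos]|].
    rewrite <- (Rmult_1_r q) at 2. apply Rmult_lt_compat_l; [lra|].
    rewrite <- exp_0 at 2. apply exp_increasing.
    assert (0 <= Rabs t) by apply Rabs_pos.
    assert (0 < M * (Rabs t + 1)) by (apply Rmult_lt_0_compat; lra).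
    lra. }
  assert (Hlow : time_map x0 < t).
  { eapply Rle_lt_trans; [apply time_map_le_log; lra|].
    unfold x0. rewrite ln_mult, ln_exp by (lra || apply exp_pos).
    replace ((ln q + - (M * (Rabs t + 1)) - ln q) / M) with (- (Rabs t + 1)) by (field; lra).
    assert (- t <= Rabs t) by (rewrite <- Rabs_Ropp; apply RRle_abs). lra. }
  destruct (IVT_interv (fun x => time_map x - t) x0 mid) as [x [Hx E]].
  - intros z Hz. apply continuity_pt_minus; [|apply continuity_pt_const; now intro].
    apply (is_derive_continuity_pt time_map z (inv_rate z)), time_map_derive. unfold mid in *. lra.
  - unfold mid. lra.
  - lra.
  - lra.
  - exists x. split; [|lra].
    split; [lra|]. destruct Hx as [_ [Hx|Hx]]; [exact Hx|].
    subst x. lra.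
Qed.

Let time_map_inv (t : R) : R :=
  epsilon (inhabits 0) (fun x => 0 < x < mid /\ time_map x = t).

Lemma time_map_inv_spec t : t < time_map mid ->
  0 < time_map_inv t < mid /\ time_map (time_map_inv t) = t.
Proof. intros Ht. apply (epsilon_spec (inhabits 0)), time_map_surj, Ht. Qed.

Lemma time_map_inv_le x t : 0 < x < D -> t <= time_map x -> t < time_map mid ->
  time_map_inv t <= x.
Proof.
  intros Hx Htx Ht. destruct (time_map_inv_spec t Ht) as [Hi E].
  destruct (Rle_or_lt (time_map_inv t) x) as [L|L]; [exact L|].
  assert (time_map x < time_map (time_map_inv t))
    by (apply time_map_incr; unfold mid in *; lra).
  lra.
Qed.

Lemma time_map_inv_ge x t : 0 < x < mid -> time_map x <= t -> t < time_map mid ->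
  x <= time_map_inv t.
Proof.
  intros Hx Htx Ht. destruct (time_map_inv_spec t Ht) as [Hi E].
  destruct (Rle_or_lt x (time_map_inv t)) as [L|L]; [exact L|].
  assert (time_map (time_map_inv t) < time_map x)
    by (apply time_map_incr; unfold mid in *; lra).
  lra.
Qed.

Lemma time_map_inv_derive t : t < time_map mid ->
  is_derive time_map_inv t (time_map_inv t * phi (time_map_inv t)).
Proof.
  intros Ht. destruct (time_map_inv_spec t Ht) as [Hx Ex].
  set (x := time_map_inv t) in *.
  assert (Hmid : mid < D) by (unfold mid; lra).
  assert (Hphi : 0 < phi x) by (destruct (phi_bounds x); lra).
  replace (x * phi x) with (/ inv_rate x) by (unfold inv_rate; field; nra).
  apply (is_derive_inverse time_map time_map_inv inv_rate (x / 2) ((x + mid) / 2)).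
  - intros y y' Hy Hyy' Hy'. apply time_map_incr; lra.
  - intros y Hy. apply time_map_derive. lra.
  - intros z Hz.
    assert (Hzt : z < time_map mid)
      by (eapply Rle_lt_trans; [apply Hz | apply time_map_incr; lra]).
    split; [split|].
    + apply time_map_inv_ge; lra.
    + apply time_map_inv_le; lra.
    + apply time_map_inv_spec, Hzt.
  - rewrite <- Ex. split; apply time_map_incr; lra.
  - apply Rgt_not_eq, inv_rate_pos. change (0 < x < D). lra.
Qed.

Lemma decay_solution_pos : exists (a : R) (rho : R -> R),
  a < 0 /\ rho 0 = q /\
  (forall t, a < t -> is_derive rho t (- (rho t * phi (rho t)))) /\
  (forall t, 0 <= t -> 0 < rho t <= q) /\
  is_lim rho p_infty 0.
Proof.
  assert (Hmid : q < mid < D) by (unfold mid; lra).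
  assert (Hq : 0 < time_map mid) by (rewrite <- time_map_q; apply time_map_incr; lra).
  exists (- time_map mid), (fun t => time_map_inv (- t)). split; [lra|]. split.
  { rewrite Ropp_0. pose proof time_map_q.
    apply Rle_antisym; [apply time_map_inv_le | apply time_map_inv_ge]; lra. }
  split.
  { intros t Ht. apply is_derive_reverse_time, time_map_inv_derive. lra. }
  split.
  { intros t Ht. pose proof time_map_q. split.
    - apply time_map_inv_spec. lra.
    - apply time_map_inv_le; lra. }
  apply is_lim_spec. intros eps. simpl.
  set (e := Rmin (eps / 2) q).
  assert (He : 0 < e <= q /\ e < eps).
  { assert (0 < eps) by apply cond_pos. unfold e.
    split; [split; [apply Rmin_pos|apply Rmin_r]|eapply Rle_lt_trans; [apply Rmin_l|]]; lra. }
  assert (Hte : time_map e <= 0).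
  { pose proof time_map_q. destruct (Req_dec e q) as [->|Hne]; [lra|].
    assert (time_map e < time_map q) by (apply time_map_incr; lra). lra. }
  exists (- time_map e). intros t Ht.
  destruct (time_map_inv_spec (- t)) as [Hi _]; [lra|].
  assert (time_map_inv (- t) <= e) by (apply time_map_inv_le; lra).
  rewrite Rminus_0_r, Rabs_pos_eq; lra.
Qed.

End Decay.

Lemma decay_solution (phi : R -> R) (D m M q : R) :
  0 < m -> (forall u, 0 < u < D -> m <= phi u <= M) ->
  (forall u, 0 < u < D -> continuity_pt phi u) -> 0 <= q < D ->
  exists (a : R) (rho : R -> R), a < 0 /\ rho 0 = q /\
    (forall t, a < t -> is_derive rho t (- (rho t * phi (rho t)))) /\
    (forall t, 0 <= t -> 0 <= rho t <= q) /\
    is_lim rho p_infty 0.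
Proof.
  intros Hm Hb Hc [[Hq|<-] HqD].
  - destruct (decay_solution_pos phi D m M q Hm Hb Hc) as (a & rho & Ha & H0 & Hd & Hr & Hl);
      [lra|].
    exists a, rho. do 3 (split; [assumption|]). split; [|assumption].
    intros t Ht. specialize (Hr t Ht). lra.
  - exists (-1), (fun _ => 0). split; [lra|]. split; [reflexivity|].
    split; [|split; [intros; lra | apply is_lim_const]].
    intros t _. rewrite Rmult_0_l, Ropp_0. apply is_derive_const_R.
Qed.

Lemma cont3_eps_delta (f : R -> R -> R -> R) (a b c : R) : cont3 f a b c ->
  forall eps, 0 < eps -> exists del, 0 < del /\ forall x y z,
    Rabs (x - a) < del -> Rabs (y - b) < del -> Rabs (z - c) < del ->
    Rabs (f x y z - f a b c) < eps.
Proof.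
  intros H eps He.
  apply filterlim_locally with (eps := mkposreal eps He) in H.
  destruct H as [d Hd]. exists d. split; [apply cond_pos|].
  intros x y z Hx Hy Hz. apply (Hd ((x, y), z)). repeat split; assumption.
Qed.

Lemma smooth3_small (h : R -> R -> R -> R) (a b c : R) : smooth3 h -> h a b c = 0 ->
  exists del, 0 < del /\ forall x y z,
    Rabs (x - a) < del -> Rabs (y - b) < del -> Rabs (z - c) < del ->
    Rabs (h x y z) < 1 / 2.
Proof.
  intros S H0. destruct (cont3_eps_delta h a b c (S O a b c) (1 / 2)) as [d [Hd H]]; [lra|].
  exists d. split; [exact Hd|]. intros x y z Hx Hy Hz.
  specialize (H x y z Hx Hy Hz). rewrite H0, Rminus_0_r in H. exact H.
Qed.

Lemma continuity_pt_cont3_comp (h : R -> R -> R -> R) (s y r : R -> R) (t : R) :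
  (forall a b c, cont3 h a b c) ->
  continuity_pt s t -> continuity_pt y t -> continuity_pt r t ->
  continuity_pt (fun t => h (s t) (y t) (r t)) t.
Proof.
  intros Hh Hs Hy Hr. apply continuity_pt_locally. intros eps.
  destruct (cont3_eps_delta h (s t) (y t) (r t) (Hh _ _ _) eps (cond_pos eps))
    as [d [Hd H]].
  apply continuity_pt_locally with (eps := mkposreal d Hd) in Hs, Hy, Hr.
  generalize (filter_and _ _ Hs (filter_and _ _ Hy Hr)).
  apply filter_imp. intros u [A [B C]]. apply H; assumption.
Qed.

Lemma Rmin4_le (d a b c e : R) : d <= Rmin (Rmin a b) (Rmin c e) ->
  d <= a /\ d <= b /\ d <= c /\ d <= e.
Proof.
  intros H.
  pose proof (Rmin_l (Rmin a b) (Rmin c e)). pose proof (Rmin_r (Rmin a b) (Rmin c e)).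
  pose proof (Rmin_l a b). pose proof (Rmin_r a b).
  pose proof (Rmin_l c e). pose proof (Rmin_r c e).
  lra.
Qed.

Section System.

Variables (al xi : R) (h1 h2 h3 : R -> R -> R -> R).

Lemma solution_continuity_pt (a b : Rbar) (s y r : R -> R) (t : R) :
  is_solution al xi h1 h2 h3 a b s y r -> Rbar_lt a t -> Rbar_lt t b ->
  continuity_pt s t /\ continuity_pt y t /\ continuity_pt r t.
Proof.
  intros H Ha Hb. destruct (H t Ha Hb) as [Ds [Dy Dr]].
  repeat split; eapply is_derive_continuity_pt; eassumption.
Qed.

Lemma rho_plane_invariant : smooth3 h3 ->
  forall (a b : Rbar) (s y r : R -> R) (t0 : R),
    is_solution al xi h1 h2 h3 a b s y r ->
    Rbar_lt a t0 -> Rbar_lt t0 b -> r t0 = 0 ->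
    forall t : R, Rbar_lt a t -> Rbar_lt t b -> r t = 0.
Proof.
  intros S3 a b s y r t0 Hsol.
  apply (linear_ode_zero r
    (fun t => (2 - r t * s t) * (y t - al / xi) * (1 + h3 (s t) (y t) (r t)))).
  - intros t Ha Hb. destruct (Hsol t Ha Hb) as [_ [_ Dr]].
    unfold F_rho in Dr. replace (r t * _) with
      (r t * (2 - r t * s t) * (y t - al / xi) * (1 + h3 (s t) (y t) (r t))) by ring.
    exact Dr.
  - intros t Ha Hb. destruct (solution_continuity_pt a b s y r t Hsol Ha Hb) as [Cs [Cy Cr]].
    repeat first [ apply continuity_pt_mult | apply continuity_pt_minus
                 | apply continuity_pt_plus | apply continuity_pt_const; now intro
                 | apply continuity_pt_cont3_comp; [apply (S3 O)| | |]
                 | assumption ].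
Qed.

Lemma sigma_plane_invariant : smooth3 h1 ->
  forall (a b : Rbar) (s y r : R -> R) (t0 : R),
    is_solution al xi h1 h2 h3 a b s y r ->
    Rbar_lt a t0 -> Rbar_lt t0 b -> s t0 = 0 ->
    forall t : R, Rbar_lt a t -> Rbar_lt t b -> s t = 0.
Proof.
  intros S1 a b s y r t0 Hsol.
  apply (linear_ode_zero s
    (fun t => (-2 + r t * s t + r t * r t) * (y t - al / xi) * (1 + h1 (s t) (y t) (r t)))).
  - intros t Ha Hb. destruct (Hsol t Ha Hb) as [Ds _].
    unfold F_sigma in Ds. replace (s t * _) with
      (s t * (-2 + r t * s t + r t ^ 2) * (y t - al / xi) * (1 + h1 (s t) (y t) (r t)))
      by ring.
    exact Ds.
  - intros t Ha Hb. destruct (solution_continuity_pt a b s y r t Hsol Ha Hb) as [Cs [Cy Cr]].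
    repeat first [ apply continuity_pt_mult | apply continuity_pt_minus
                 | apply continuity_pt_plus | apply continuity_pt_const; now intro
                 | apply continuity_pt_cont3_comp; [apply (S1 O)| | |]
                 | assumption ].
Qed.

Lemma fixed_line (y : R) :
  F_sigma al xi h1 0 y 0 = 0 /\ F_y al xi h2 0 y 0 = 0 /\ F_rho al xi h3 0 y 0 = 0.
Proof. unfold F_sigma, F_y, F_rho. repeat split; ring. Qed.

Hypotheses (xi_pos : 0 < xi) (al_pos : 0 < al).
Hypotheses (h1_smooth : smooth3 h1) (h3_smooth : smooth3 h3).
Hypotheses (h1_flat : forall s y, h1 s y 0 = 0) (h3_flat : forall s y, h3 s y 0 = 0).

Lemma in_U_line (d c s y r : R) : in_U d 0 c 0 s y r ->
  0 <= s < d /\ 0 <= r < d /\ c - d < y < c + d.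
Proof.
  intros (Hs & Hr & Hs' & Hy & Hr'). rewrite Rminus_0_r in Hs', Hr'.
  apply Rabs_def2 in Hs', Hy, Hr'. lra.
Qed.

Lemma in_U_line_intro (d c r : R) : 0 < d -> 0 <= r < d -> in_U d 0 c 0 0 c r.
Proof.
  intros Hd Hr. unfold in_U. rewrite !Rminus_0_r, Rminus_diag, Rabs_R0, Rabs_pos_eq by lra.
  lra.
Qed.

Lemma F_sigma_mul_sign (s y r : R) : 0 <= s < 1 -> 0 <= r < 1 ->
  Rabs (h1 s y r) < 1 / 2 -> F_sigma al xi h1 s y r * (y - al / xi) <= 0.
Proof.
  intros Hs Hr Hh. apply Rabs_def2 in Hh. unfold F_sigma.
  assert (0 <= s * (2 - r * s - r ^ 2)) by (apply Rmult_le_pos; nra).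
  assert (0 <= s * (2 - r * s - r ^ 2) * ((y - al / xi) ^ 2 * (1 + h1 s y r)))
    by (apply Rmult_le_pos; [|apply Rmult_le_pos; [apply pow2_ge_0|]]; lra).
  nra.
Qed.

Lemma F_sigma_sign_near_line (c d del : R) :
  d <= 1 -> d <= del ->
  (forall x y z, Rabs x < del -> Rabs (y - c) < del -> Rabs z < del ->
     Rabs (h1 x y z) < 1 / 2) ->
  forall s y r, in_U d 0 c 0 s y r -> F_sigma al xi h1 s y r * (y - al / xi) <= 0.
Proof.
  intros Hd1 Hdd Hh s y r HU. pose proof (in_U_line d c s y r HU) as (Hs & Hr & Hy).
  apply F_sigma_mul_sign; [lra|lra|].
  apply Hh; apply Rabs_def1; lra.
Qed.

Lemma is_solution_on_line (c : R) (a b : Rbar) (r : R -> R) :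
  (forall t : R, Rbar_lt a t -> Rbar_lt t b -> is_derive r t (F_rho al xi h3 0 c (r t))) ->
  is_solution al xi h1 h2 h3 a b (fun _ => 0) (fun _ => c) r.
Proof.
  intros Hr t Ha Hb.
  replace (F_sigma al xi h1 0 c (r t)) with 0 by (unfold F_sigma; ring).
  replace (F_y al xi h2 0 c (r t)) with 0 by (unfold F_y; ring).
  split; [|split; [|now apply Hr]]; apply is_derive_const_R.
Qed.

Lemma decay_on_line (c d q : R) :
  (forall u, 0 < u < d -> Rabs (h3 0 c u) < 1 / 2) -> 0 <= q < d ->
  exists (a : R) (rho : R -> R), a < 0 /\ rho 0 = q /\
    (forall t, a < t ->
       is_derive rho t (- (rho t * (2 * (al / xi) * (1 + h3 0 c (rho t)))))) /\
    (forall t, 0 <= t -> 0 <= rho t <= q) /\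
    is_lim rho p_infty 0.
Proof.
  intros Hh Hq. assert (Hk : 0 < al / xi) by (apply Rdiv_lt_0_compat; assumption).
  apply (decay_solution (fun u => 2 * (al / xi) * (1 + h3 0 c u)) d (al / xi) (3 * (al / xi)));
    [exact Hk| | |exact Hq].
  - intros u Hu. specialize (Hh u Hu). apply Rabs_def2 in Hh. nra.
  - intros u Hu. apply continuity_pt_mult; [apply continuity_pt_const; now intro|].
    apply continuity_pt_plus; [apply continuity_pt_const; now intro|].
    apply (continuity_pt_cont3_comp h3 (fun _ => 0) (fun _ => c) (fun u => u));
      [apply (h3_smooth O) | apply continuity_pt_const; now intro
      | apply continuity_pt_const; now intro | apply continuity_pt_id].
Qed.

Lemma line_neighbourhood (c : R) :
  exists d0, 0 < d0 /\ d0 <= al / xi /\ forall d, 0 < d -> d <= d0 ->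
    (forall s y r, in_U d 0 c 0 s y r -> F_sigma al xi h1 s y r * (y - al / xi) <= 0) /\
    (forall u, 0 < u < d -> Rabs (h3 0 c u) < 1 / 2).
Proof.
  assert (Hk : 0 < al / xi) by (apply Rdiv_lt_0_compat; assumption).
  destruct (smooth3_small h1 0 c 0 h1_smooth (h1_flat 0 c)) as (d1 & Hd1 & B1).
  destruct (smooth3_small h3 0 c 0 h3_smooth (h3_flat 0 c)) as (d3 & Hd3 & B3).
  exists (Rmin (Rmin (al / xi) 1) (Rmin d1 d3)).
  split; [repeat apply Rmin_pos; lra|]. split; [apply (Rmin4_le _ _ _ _ _ (Rle_refl _))|].
  intros d Hd Hdd. destruct (Rmin4_le _ _ _ _ _ Hdd) as (_ & D1 & Dd1 & Dd3). split.
  - apply (F_sigma_sign_near_line c d d1 D1 Dd1).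
    intros x y z Hx Hy Hz. apply B1; rewrite ?Rminus_0_r; assumption.
  - intros u Hu. apply B3; rewrite ?Rminus_0_r, ?Rminus_diag, ?Rabs_R0, ?Rabs_pos_eq; lra.
Qed.

Lemma loc_stable_set_origin :
  exists d0, 0 < d0 /\ forall d, 0 < d -> d <= d0 ->
    forall q1 q2 q3, in_U d 0 0 0 q1 q2 q3 ->
      (loc_stable_set al xi h1 h2 h3 d 0 0 0 q1 q2 q3 <-> q1 = 0 /\ q2 = 0).
Proof.
  destruct (line_neighbourhood 0) as (d0 & Hd0 & Hd0k & Hnear).
  exists d0. split; [exact Hd0|]. intros d Hd Hdd q1 q2 q3 HU.
  destruct (Hnear d Hd Hdd) as [Hsign Hh3]. split.
  - intros (a & s & y & r & Ha & Hsol & <- & <- & _ & HUt & Ls & Ly & _).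
    assert (Hs0 : s 0 = 0).
    { apply Rle_antisym; [|destruct (in_U_line _ _ _ _ _ (HUt 0 (Rle_refl 0))); lra].
      apply (lim_p_infty_ge_of_derive_nonneg s
        (fun t => F_sigma al xi h1 (s t) (y t) (r t))); [| |exact Ls].
      - intros t Ht. apply Hsol; simpl; [lra | exact I].
      - intros t Ht. specialize (Hsign _ _ _ (HUt t Ht)).
        destruct (in_U_line _ _ _ _ _ (HUt t Ht)) as (_ & _ & Hy). nra. }
    split; [exact Hs0|]. apply (lim_p_infty_eq_of_derive_zero y); [|exact Ly].
    intros t Ht. destruct (Hsol t) as (_ & Dy & _); [simpl; lra | exact I|].
    rewrite (sigma_plane_invariant h1_smooth (Finite a) p_infty s y r 0 Hsol)
      in Dy by (simpl; auto; lra).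
    replace (F_y al xi h2 0 (y t) (r t)) with 0 in Dy by (unfold F_y; ring). exact Dy.
  - intros [-> ->]. destruct (in_U_line _ _ _ _ _ HU) as (_ & Hq3 & _).
    destruct (decay_on_line 0 d q3 Hh3 Hq3) as (a & rho & Ha & R0 & Rd & Rb & Rl).
    exists a, (fun _ => 0), (fun _ => 0), rho.
    split; [exact Ha|]. split.
    { apply is_solution_on_line. intros t Ht _.
      replace (F_rho al xi h3 0 0 (rho t)) with
        (- (rho t * (2 * (al / xi) * (1 + h3 0 0 (rho t))))) by (unfold F_rho; ring).
      apply Rd, Ht. }
    do 3 (split; [reflexivity || exact R0|]). split.
    { intros t Ht. apply in_U_line_intro; [exact Hd|]. specialize (Rb t Ht). lra. }
    split; [apply is_lim_const|]. split; [apply is_lim_const | exact Rl].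
Qed.

Lemma loc_unstable_set_far_end :
  exists d0, 0 < d0 /\ forall d, 0 < d -> d <= d0 ->
    forall q1 q2 q3, in_U d 0 (2 * al / xi) 0 q1 q2 q3 ->
      (loc_unstable_set al xi h1 h2 h3 d 0 (2 * al / xi) 0 q1 q2 q3 <->
       q1 = 0 /\ q2 = 2 * al / xi).
Proof.
  assert (E2k : 2 * al / xi = 2 * (al / xi)) by (field; lra).
  destruct (line_neighbourhood (2 * al / xi)) as (d0 & Hd0 & Hd0k & Hnear).
  exists d0. split; [exact Hd0|]. intros d Hd Hdd q1 q2 q3 HU.
  destruct (Hnear d Hd Hdd) as [Hsign Hh3]. split.
  - intros (b & s & y & r & Hb & Hsol & <- & <- & _ & HUt & Ls & Ly & _).
    assert (Hs0 : s 0 = 0).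
    { apply Rle_antisym; [|destruct (in_U_line _ _ _ _ _ (HUt 0 (Rle_refl 0))); lra].
      apply (lim_m_infty_ge_of_derive_nonpos s
        (fun t => F_sigma al xi h1 (s t) (y t) (r t))); [| |exact Ls].
      - intros t Ht. apply Hsol; simpl; [exact I | lra].
      - intros t Ht. specialize (Hsign _ _ _ (HUt t Ht)).
        destruct (in_U_line _ _ _ _ _ (HUt t Ht)) as (_ & _ & Hy). nra. }
    split; [exact Hs0|]. apply (lim_m_infty_eq_of_derive_zero y); [|exact Ly].
    intros t Ht. destruct (Hsol t) as (_ & Dy & _); [exact I | simpl; lra |].
    rewrite (sigma_plane_invariant h1_smooth m_infty (Finite b) s y r 0 Hsol)
      in Dy by (simpl; auto; lra).
    replace (F_y al xi h2 0 (y t) (r t)) with 0 in Dy by (unfold F_y; ring). exact Dy.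
  - intros [-> ->]. destruct (in_U_line _ _ _ _ _ HU) as (_ & Hq3 & _).
    destruct (decay_on_line (2 * al / xi) d q3 Hh3 Hq3)
      as (a & rho & Ha & R0 & Rd & Rb & Rl).
    exists (- a), (fun _ => 0), (fun _ => 2 * al / xi), (fun t => rho (- t)).
    split; [lra|]. split.
    { apply is_solution_on_line. intros t _ Ht. simpl in Ht.
      replace (F_rho al xi h3 0 (2 * al / xi) (rho (- t))) with
        (- - (rho (- t) * (2 * (al / xi) * (1 + h3 0 (2 * al / xi) (rho (- t))))))
        by (unfold F_rho; rewrite E2k; ring).
      apply is_derive_reverse_time, Rd. lra. }
    do 2 (split; [reflexivity|]). split; [rewrite Ropp_0; exact R0|]. split.
    { intros t Ht. apply in_U_line_intro; [exact Hd|]. specialize (Rb (- t)). lra. }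
    split; [apply is_lim_const|]. split; [apply is_lim_const|].
    apply is_lim_reverse_time, Rl.
Qed.

Lemma heteroclinic_connection :
  exists s y r : R -> R,
    is_solution al xi h1 h2 h3 m_infty p_infty s y r /\
    (forall t, 0 < y t < 2 * al / xi /\
               s t = 2 * al / xi * y t - (y t) ^ 2 /\ r t = 0) /\
    (forall y0, 0 < y0 < 2 * al / xi -> exists t, y t = y0) /\
    is_lim s m_infty 0 /\ is_lim y m_infty 0 /\ is_lim r m_infty 0 /\
    is_lim s p_infty 0 /\ is_lim y p_infty (2 * al / xi) /\
    is_lim r p_infty 0.
Proof.
  assert (Hk : al / xi = 2 * al / xi / 2) by (field; lra).
  set (c := 2 * al / xi) in *.
  assert (Hc : 0 < c) by (unfold c; apply Rdiv_lt_0_compat; lra).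
  set (curve_y := fun p => c * p).
  set (curve_s := fun p => c * (c * p) - (c * p) ^ 2).
  assert (Cy : forall p, continuous curve_y p)
    by (intros p; apply (ex_derive_continuous curve_y); unfold curve_y; auto_derive; exact I).
  assert (Cs : forall p, continuous curve_s p)
    by (intros p; apply (ex_derive_continuous curve_s); unfold curve_s; auto_derive; exact I).
  pose proof (is_lim_logistic_curve_m_infty c Hc) as Lm.
  pose proof (is_lim_logistic_curve_p_infty c Hc) as Lp.
  exists (fun t => curve_s (logistic (c * t))), (fun t => curve_y (logistic (c * t))),
    (fun _ => 0).
  split; [|split; [|split]].
  - intros t _ _. unfold curve_s, curve_y. split; [|split].
    + unfold F_sigma. rewrite h1_flat, Hk.
      auto_derive; [repeat split; eexists; apply is_derive_logistic|].
      replace (Derive _ (c * t)) with (logistic (c * t) * (1 - logistic (c * t)))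
        by (symmetry; apply is_derive_unique, is_derive_logistic).
      field.
    + unfold F_y. rewrite Rmult_0_r, !Rmult_0_l, Rplus_0_r. apply is_derive_logistic_curve.
    + unfold F_rho. rewrite !Rmult_0_l.
      apply is_derive_const_R.
  - intros t. pose proof (logistic_bounds (c * t)). unfold curve_s, curve_y.
    split; [split; nra | split; reflexivity].
  - intros y0 Hy0. exists (ln (y0 / c / (1 - y0 / c)) / c). unfold curve_y.
    replace (c * (ln (y0 / c / (1 - y0 / c)) / c)) with (ln (y0 / c / (1 - y0 / c)))
      by (field; lra).
    rewrite logistic_logit; [field; lra|].
    split; [apply Rdiv_lt_0_compat | apply Rlt_div_l]; lra.
  - repeat split; try apply is_lim_const.
    + apply (is_lim_comp_continuous_eq _ _ _ 0 _ Lm (Cs 0)). unfold curve_s. ring.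
    + apply (is_lim_comp_continuous_eq _ _ _ 0 _ Lm (Cy 0)). unfold curve_y. ring.
    + apply (is_lim_comp_continuous_eq _ _ _ 1 _ Lp (Cs 1)). unfold curve_s. ring.
    + apply (is_lim_comp_continuous_eq _ _ _ 1 _ Lp (Cy 1)). unfold curve_y. ring.
Qed.

End System.

Theorem lemma5 (xi al : R) (h1 h2 h3 : R -> R -> R -> R) :
  0 < xi -> 0 < al ->
  smooth3 h1 -> smooth3 h2 -> smooth3 h3 ->
  (forall s y, h1 s y 0 = 0) -> (forall s y, h2 s y 0 = 0) ->
  (forall s y, h3 s y 0 = 0) ->
  (* the plane {rho = 0} is invariant *)
  (forall (a b : Rbar) (s y r : R -> R) (t0 : R),
     is_solution al xi h1 h2 h3 a b s y r ->
     Rbar_lt a t0 -> Rbar_lt t0 b -> r t0 = 0 ->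
     forall t : R, Rbar_lt a t -> Rbar_lt t b -> r t = 0) /\
  (* the plane {sigma = 0} is invariant *)
  (forall (a b : Rbar) (s y r : R -> R) (t0 : R),
     is_solution al xi h1 h2 h3 a b s y r ->
     Rbar_lt a t0 -> Rbar_lt t0 b -> s t0 = 0 ->
     forall t : R, Rbar_lt a t -> Rbar_lt t b -> s t = 0) /\
  (* {rho = sigma = 0} is a line of fixed points *)
  (forall y, F_sigma al xi h1 0 y 0 = 0 /\ F_y al xi h2 0 y 0 = 0 /\
             F_rho al xi h3 0 y 0 = 0) /\
  (* (i) strong stable manifold of (0,0,0) *)
  (exists d0, 0 < d0 /\ forall d, 0 < d -> d <= d0 ->
     forall q1 q2 q3, in_U d 0 0 0 q1 q2 q3 ->
       (loc_stable_set al xi h1 h2 h3 d 0 0 0 q1 q2 q3 <->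
        q1 = 0 /\ q2 = 0)) /\
  (* (ii) heteroclinic connection gamma^{2,4} *)
  (exists s y r : R -> R,
     is_solution al xi h1 h2 h3 m_infty p_infty s y r /\
     (forall t, 0 < y t < 2 * al / xi /\
                s t = 2 * al / xi * y t - (y t) ^ 2 /\ r t = 0) /\
     (forall y0, 0 < y0 < 2 * al / xi -> exists t, y t = y0) /\
     is_lim s m_infty 0 /\ is_lim y m_infty 0 /\ is_lim r m_infty 0 /\
     is_lim s p_infty 0 /\ is_lim y p_infty (2 * al / xi) /\
     is_lim r p_infty 0) /\
  (* (iii) strong unstable manifold of (0, 2 al/xi, 0) *)
  (exists d0, 0 < d0 /\ forall d, 0 < d -> d <= d0 ->
     forall q1 q2 q3, in_U d 0 (2 * al / xi) 0 q1 q2 q3 ->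
       (loc_unstable_set al xi h1 h2 h3 d 0 (2 * al / xi) 0 q1 q2 q3 <->
        q1 = 0 /\ q2 = 2 * al / xi)).
Proof.
  intros Hxi Hal S1 _ S3 H1 _ H3.
  split; [exact (rho_plane_invariant al xi h1 h2 h3 S3)|].
  split; [exact (sigma_plane_invariant al xi h1 h2 h3 S1)|].
  split; [exact (fixed_line al xi h1 h2 h3)|].
  split; [exact (loc_stable_set_origin al xi h1 h2 h3 Hxi Hal S1 S3 H1 H3)|].
  split; [exact (heteroclinic_connection al xi h1 h2 h3 Hxi Hal H1)|].
  exact (loc_unstable_set_far_end al xi h1 h2 h3 Hxi Hal S1 S3 H1 H3).
Qed.
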